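(* Let $r\ge3$ be an integer, let $\mathscr C$ be a class of graphs with sub-exponential expansion, and let $g$ be an integer such that every graph in $\mathscr C$ with girth at least $g$ is $(r+1)$-path degenerate. Then every graph $G\in\mathscr C$ with maximum degree $\Delta\ge3$ and $\mathrm{girth}(G)\ge g$ that is not a forest satisfies $a'_r(G)=\max\{\Delta,r\}$.
   Context: Graphs are finite and simple; the girth is the length of a shortest cycle. For an integer $r\ge3$, $a'_r(G)$ is the minimum number of colors in a proper edge coloring of $G$ such that every cycle $C$ of $G$ receives at least $\min\{|C|,r\}$ distinct colors. A strict ear of a graph $G$ is a path of $G$ whose internal vertices all have degree $2$ in $G$ and whose two endpoints are distinct. For an integer $p\ge1$, a $p$-reduction of $G$ is the deletion of either an isolated vertex, or a vertex of degree $1$, or the internal vertices of a strict ear of $G$ of length at least $p$. A graph is $p$-path degenerate if it can be reduced to the empty graph by a sequence of $p$-reductions. A class $\mathscr C$ has sub-exponential expansion if $\sup\{\nabla_r(G):G\in\mathscr C\}=2^{o(r)}$, where $\nabla_r(G)$ is the maximum of $|E(H)|/|V(H)|$ over nonempty shallow minors $H$ of $G$ at depth $r$ (minors obtained by contracting vertex-disjoint subgraphs of radius at most $r$ and deleting vertices and edges). *)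

From Stdlib Require Import Rdefinitions Raxioms Rpower.
From mathcomp Require Import all_boot.

Set Implicit Arguments.
Unset Strict Implicit.
Unset Printing Implicit Defensive.

Definition sgraph (n : nat) (e : rel 'I_n) : Prop :=
  symmetric e /\ irreflexive e.

Definition graph_class := forall n : nat, rel 'I_n -> Prop.

Section Graphs.
Variables (n : nat) (e : rel 'I_n).

Definition is_cycle (c : seq 'I_n) : bool := ucycleb e c && (3 <= size c).

Definition deg (v : 'I_n) : nat := #|[set u | e v u]|.
Definition maxdeg : nat := \max_(v : 'I_n) deg v.

(* girth(G) >= g (vacuous for forests, whose girth is infinite) *)
Definition girth_ge (g : nat) : Prop :=
  forall c, is_cycle c -> g <= size c.

Definition forest : Prop := forall c, ~~ is_cycle c.

Definition cycle_colors (col : 'I_n -> 'I_n -> nat) (c : seq 'I_n) : seq nat :=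
  [seq col p.1 p.2 | p <- zip c (rot 1 c)].

Definition r_acyclic_coloring (r k : nat) (col : 'I_n -> 'I_n -> nat) : Prop :=
  [/\ forall x y, e x y -> col x y = col y x,
      forall x y, e x y -> col x y < k,
      forall x y z, e x y -> e x z -> y != z -> col x y != col x z
    & forall c, is_cycle c ->
        minn (size c) r <= size (undup (cycle_colors col c))].

Definition r_colorable (r k : nat) : Prop :=
  exists col, r_acyclic_coloring r k col.

Definition arc_index_is (r k : nat) : Prop :=
  r_colorable r k /\ forall k', r_colorable r k' -> k <= k'.

Definition deg_in (S : {set 'I_n}) (v : 'I_n) : nat := #|[set u in S | e v u]|.
Definition erel_in (S : {set 'I_n}) : rel 'I_n :=
  fun x y => [&& x \in S, y \in S & e x y].

Definition p_reduction (p : nat) (S S' : {set 'I_n}) : Prop :=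
  (exists2 v, v \in S & deg_in S v <= 1 /\ S' = S :\ v)
  \/
  (exists x y (s : seq 'I_n),
     [/\ x != y,
         path (erel_in S) x (rcons s y) && (x \in S),
         uniq (x :: rcons s y) &&
         all (fun v => deg_in S v == 2) s,
         p <= (size s).+1
       & S' = S :\: [set v in s]]).

Inductive reducible (p : nat) : {set 'I_n} -> Prop :=
  | red_empty : reducible p set0
  | red_step S S' : p_reduction p S S' -> reducible p S' -> reducible p S.

Definition path_degenerate (p : nat) : Prop := reducible p [set: 'I_n].

(* H (on 'I_m) is a shallow minor of G at depth d: disjoint branch sets
   B i, each containing a centre c i from which every vertex of B i is at
   distance <= d inside G[B i], and each edge of H is realised by an edge
   of G between the corresponding branch sets. *)
Definition shallow_minor (d m : nat) (eH : rel 'I_m) : Prop :=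
  sgraph eH /\
  exists (B : 'I_m -> {set 'I_n}) (ctr : 'I_m -> 'I_n),
    [/\ forall i j, i != j -> [disjoint B i & B j],
        forall i, ctr i \in B i,
        forall i v, v \in B i ->
          exists s : seq 'I_n, [/\ size s <= d, path e (ctr i) s,
                                   all (mem (B i)) s & last (ctr i) s = v]
      & forall i j, eH i j -> exists x y, [/\ x \in B i, y \in B j & e x y]].

Definition nedges (m : nat) (eH : rel 'I_m) : nat :=
  #|[set p : 'I_m * 'I_m | eH p.1 p.2 && (p.1 < p.2)]|.

(* nabla_d(G) <= x : every nonempty shallow minor at depth d has
   |E(H)| / |V(H)| <= x *)
Definition nabla_le (d : nat) (x : R) : Prop :=
  forall m (eH : rel 'I_m), 0 < m -> shallow_minor d eH ->
    Rle (Rdiv (INR (nedges eH)) (INR m)) x.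

End Graphs.

(* sup_{G in C} nabla_d(G) = 2^{o(d)} *)
Definition subexp_expansion (C : graph_class) : Prop :=
  forall eps : R, Rlt R0 eps ->
    exists d0 : nat, forall d, d0 <= d ->
      forall n (e : rel 'I_n), C n e ->
        nabla_le e d (Rpower (INR 2) (Rmult eps (INR d))).

From Stdlib Require Import Rdefinitions Raxioms Rpower.
From mathcomp Require Import all_boot zify.

(* Peel G down to the empty graph by (r+1)-reductions and colour it back up
   with K = max(Delta, r) colours.  A pendant vertex receives a colour missing
   at its neighbour.  A strict ear x, s_1, ..., s_m, y with m >= r is coloured
   along the path, starting with a colour missing at x, ending with one missing
   at y, with consecutive colours distinct and at least r colours in total.
   Since the s_i have degree 2, a cycle through one of them runs along the
   whole ear and sees these r colours; every other cycle keeps its colours.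
   Conversely a proper colouring needs Delta colours, and a cycle, which has
   length at least r+1 in an (r+1)-path degenerate graph, needs r colours. *)

Set Implicit Arguments.
Unset Strict Implicit.
Unset Printing Implicit Defensive.

Section CycleSeq.
Variable T : eqType.
Implicit Types (c : seq T) (u : T).

Lemma mem_zip_rot1 c p :
  uniq c -> p \in zip c (rot 1 c) -> p.1 \in c /\ p.2 = next c p.1.
Proof.
case: c => [|y t] // Uc /(nthP (y, y)) [i].
rewrite size_zip size_rot minnn => Hi <-.
rewrite rot1_cons nth_zip ?size_rcons //= nth_rcons_default.
split; first by rewrite mem_nth.
rewrite -[next_at _ _ _ _]/(next (y :: t) _) next_nth mem_nth // index_uniq //.
Qed.

Lemma next_in_zip_rot1 c u : u \in c -> (u, next c u) \in zip c (rot 1 c).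
Proof.
case: c => [|y t] // Hu; apply/(nthP (y, y)); exists (index u (y :: t)).
  by rewrite size_zip size_rot minnn index_mem.
rewrite rot1_cons nth_zip ?size_rcons //= nth_rcons_default nth_index //.
by rewrite -[next_at _ _ _ _]/(next (y :: t) _) next_nth Hu.
Qed.

Lemma prev_in_zip_rot1 c u :
  uniq c -> u \in c -> (prev c u, u) \in zip c (rot 1 c).
Proof.
by move=> Uc Hu; rewrite -{2}(next_prev Uc u) next_in_zip_rot1 ?mem_prev.
Qed.

Lemma next_neq_prev c u : uniq c -> 3 <= size c -> u \in c -> next c u != prev c u.
Proof.
move=> Uc Sc Hu; set k := index u c.
have Hr : rot k c = u :: (drop k.+1 c ++ take k c).
  by rewrite /rot (drop_nth u _) ?nth_index ?index_mem.
rewrite -(next_rot k Uc) -(prev_rot k Uc) Hr.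
have : uniq (rot k c) by rewrite rot_uniq.
have : size (rot k c) = size c by rewrite size_rot.
rewrite Hr; case: (drop _ _ ++ _) => [|w [|z t]] /= Ssz; rewrite -?Ssz // in Sc.
case/and4P=> + Hw _ _; rewrite !inE !negb_or => /and3P[Huw Huz Hut].
have prev_last v t' : u \notin t' -> prev_at u u v t' = last v t'.
  by elim: t' v => [|a t' IH] v /=; rewrite ?eqxx // inE negb_or => /andP[/negbTE -> /IH].
rewrite eqxx (negbTE Huw) (negbTE Huz) prev_last //.
by apply: contraNneq Hw => ->; apply: mem_last.
Qed.

End CycleSeq.

Lemma fresh_color (A : seq nat) K : size A < K -> exists2 a, a < K & a \notin A.
Proof.
move=> HA; case: (boolP (all (mem A) (iota 0 K))) => [/allP sub | ].
  by have := uniq_leq_size (iota_uniq 0 K) sub; rewrite size_iota leqNgt HA.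
by case/allPn=> a; rewrite mem_iota add0n => aK aA; exists a.
Qed.

Lemma modnD_inj a K i j : i < K -> j < K -> (a + i) %% K = (a + j) %% K -> i = j.
Proof. by move=> iK jK /eqP; rewrite eqn_modDl !modn_small // => /eqP. Qed.

Lemma uniq_modD_iota a K t : t <= K -> uniq [seq (a + j) %% K | j <- iota 0 t].
Proof.
move=> tK; rewrite map_inj_in_uniq ?iota_uniq // => i j.
by rewrite !mem_iota !add0n => Hi Hj; apply: modnD_inj; lia.
Qed.

Section PathColoring.
Variables (K m a b c : nat).

(* The extra colour c separates the cyclic run a, a+1, ... (mod K) from the
   final colour b and, on a path with fewer than r+1 edges, supplies the r-th
   colour. *)
Definition path_col j := if j < m then (a + j) %% K else if j == m then c else b.

Lemma path_col_lt : 0 < K -> c < K -> b < K -> forall j, path_col j < K.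
Proof. by move=> K0 cK bK j; rewrite /path_col; case: ifP; rewrite ?ltn_pmod //; case: ifP. Qed.

Lemma path_col_adj : 1 < K -> c != (a + m.-1) %% K -> c != b ->
  forall j, j <= m -> path_col j != path_col j.+1.
Proof.
move=> K1 c_last c_b j jm; rewrite /path_col.
case: (ltnP j.+1 m) => H1.
  rewrite (ltnW H1); apply/eqP => E; have := @modnD_inj (a + j) K 0 1.
  by rewrite addn0 addn1 -addnS E; lia.
case: (ltnP j m) => H2.
  have -> : j = m.-1 by lia.
  by rewrite prednK ?eqxx 1?eq_sym //; lia.
have -> : j = m by lia.
by rewrite eqxx (gtn_eqF (ltnSn m)).
Qed.

Lemma path_col_colors r : r <= K -> r <= m.+1 ->
  (m < r -> b \in [seq (a + j) %% K | j <- iota 0 m] ->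
   c \notin [seq (a + j) %% K | j <- iota 0 m]) ->
  r <= size (undup [seq path_col j | j <- iota 0 m.+2]).
Proof.
move=> rK rm c_R; set R := [seq (a + j) %% K | j <- iota 0 m] in c_R *.
have in_path_col t : t <= m -> {subset [seq (a + j) %% K | j <- iota 0 t] <=
                                     undup [seq path_col j | j <- iota 0 m.+2]}.
  move=> tm z /mapP[j]; rewrite mem_iota add0n mem_undup => Hj ->.
  by apply/mapP; exists j; rewrite ?mem_iota /path_col ?(leq_trans Hj tm) //; lia.
have [rm' | mr] := leqP r m.
  apply: leq_trans (uniq_leq_size (uniq_modD_iota a rK) (in_path_col r rm')).
  by rewrite size_map size_iota.
pose U := rcons R (if b \in R then c else b).
have U_uniq : uniq U.
  rewrite /U rcons_uniq uniq_modD_iota ?andbT; last lia.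
  by case: ifP => bR; rewrite ?bR ?c_R.
apply: leq_trans (uniq_leq_size U_uniq _); first by rewrite size_rcons size_map size_iota.
move=> z; rewrite mem_rcons inE => /orP[/eqP -> | /(in_path_col m) -> //].
rewrite mem_undup; apply/mapP; case: ifP => _.
  by exists m; rewrite ?mem_iota /path_col ?ltnn ?eqxx //; lia.
exists m.+1; rewrite ?mem_iota /path_col ?ltnNge ?leqnSn ?(gtn_eqF (ltnSn m)) //; lia.
Qed.

End PathColoring.

Lemma path_coloring K r m a b : 3 <= r -> r <= K -> r <= m.+1 -> a < K -> b < K ->
  exists f : nat -> nat,
  [/\ f 0 = a, f m.+1 = b, forall j, f j < K,
      forall j, j <= m -> f j != f j.+1
    & r <= size (undup [seq f j | j <- iota 0 m.+2])].
Proof.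
move=> r3 rK rm aK bK; set R := [seq (a + j) %% K | j <- iota 0 m].
have [c [cK c_last c_b c_R]] : exists c, [/\ c < K, c != (a + m.-1) %% K, c != b &
                                    m < r -> b \in R -> c \notin R].
  have [/andP[mr bR] | H] := boolP ((m < r) && (b \in R)).
    have [|c cK cR] := @fresh_color R K; first by rewrite size_map size_iota; lia.
    exists c; split => //; apply: contraNneq cR => -> //.
    by apply: map_f; rewrite mem_iota; lia.
  have [|c cK cR] := @fresh_color [:: (a + m.-1) %% K; b] K; first by rewrite /=; lia.
  exists c; split => //.
  - by apply: contraNneq cR => ->; rewrite mem_head.
  - by apply: contraNneq cR => ->; rewrite !inE eqxx orbT.
  - by move=> mr bR; move: H; rewrite mr bR.
exists (path_col K m a b c); split.
- by rewrite /path_col (_ : 0 < m) ?addn0 ?modn_small //; lia.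
- by rewrite /path_col ltnNge leqnSn /= eqn_leq ltnn.
- by apply: path_col_lt; lia.
- by apply: path_col_adj; lia.
- exact: path_col_colors.
Qed.

Lemma interval_spread (Q : nat -> Prop) m i : 0 < i <= m -> Q i ->
  (forall j, 0 < j <= m -> Q j -> Q j.-1 /\ Q j.+1) -> forall j, j <= m.+1 -> Q j.
Proof.
move=> /andP[i0 im] Qi step.
have up d : i + d <= m.+1 -> Q (i + d).
  elim: d => [|d IH] Hd; rewrite ?addn0 // addnS in Hd *.
  by apply: (step (i + d) _ (IH (ltnW Hd))).2; lia.
have down d : d <= i -> Q (i - d).
  elim: d => [|d IH] Hd; rewrite ?subn0 // subnS.
  by apply: (step (i - d) _ (IH (ltnW Hd))).1; lia.
move=> j Hj; case: (leqP i j) => Hij.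
  by rewrite -(subnKC Hij); apply: up; rewrite subnKC.
by rewrite -(subKn (ltnW Hij)); apply: down; rewrite leq_subr.
Qed.

Lemma is_cycleP n (f : rel 'I_n) c :
  is_cycle f c -> [/\ uniq c, cycle f c & 3 <= size c].
Proof. by case/andP=> /andP[-> ->] ->. Qed.

Lemma eq_is_cycle n (f1 f2 : rel 'I_n) : f1 =2 f2 -> is_cycle f1 =1 is_cycle f2.
Proof. by move=> Ef c; rewrite /is_cycle /ucycleb (eq_cycle Ef). Qed.

Lemma erel_inT n (e : rel 'I_n) : erel_in e [set: 'I_n] =2 e.
Proof. by move=> x y; rewrite /erel_in !in_setT. Qed.

Section InducedSubgraph.
Variables (n : nat) (e : rel 'I_n).
Hypothesis e_sym : symmetric e.
Implicit Types (S : {set 'I_n}) (c : seq 'I_n) (u v w : 'I_n).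

Lemma deg_in_le S u : deg_in e S u <= deg e u.
Proof. by apply: subset_leq_card; apply/subsetP => z; rewrite !inE => /andP[]. Qed.

Lemma deg_in_ltS S S' u v : S' \subset S ->
  v \in S -> v \notin S' -> e u v -> deg_in e S' u < deg_in e S u.
Proof.
move=> sS vS vS' euv; apply: proper_card; rewrite properE; apply/andP; split.
  by apply/subsetP => w; rewrite !inE => /andP[/(subsetP sS) -> ->].
by apply/subsetPn; exists v; rewrite !inE ?vS ?euv ?(negbTE vS').
Qed.

Lemma deg_in_le1_nbr S v u1 u2 : deg_in e S v <= 1 ->
  u1 \in S -> e v u1 -> u2 \in S -> e v u2 -> u1 = u2.
Proof.
move=> Hd u1S e1 u2S e2; apply/eqP; apply: contraLR Hd => u12; rewrite -ltnNge.
apply: leq_trans (_ : #|[set u1; u2]| <= _); first by rewrite cards2 u12.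
apply/subset_leq_card/subsetP => z.
by rewrite !inE => /orP[] /eqP ->; rewrite ?u1S ?e1 ?u2S ?e2.
Qed.

Lemma deg_in2_nbr S u a b w : deg_in e S u = 2 -> a != b ->
  a \in S -> e u a -> b \in S -> e u b -> w \in S -> e u w -> w = a \/ w = b.
Proof.
move=> Hd ab aS ea bS eb wS ew.
have E : [set z in S | e u z] == [set a; b].
  rewrite eq_sym eqEcard cards2 ab -/(deg_in e S u) Hd andbT.
  by apply/subsetP => z; rewrite !inE => /orP[] /eqP ->; rewrite ?aS ?ea ?bS ?eb.
have : w \in [set z in S | e u z] by rewrite inE wS ew.
by rewrite (eqP E) !inE => /orP[] /eqP ->; [left|right].
Qed.

Lemma cycle_in_nbrs S c u : is_cycle (erel_in e S) c -> u \in c ->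
  [/\ next c u != prev c u, next c u \in S, prev c u \in S,
      e u (next c u) & e (prev c u) u].
Proof.
move=> /is_cycleP[Uc Cc Sc] Hu; rewrite next_neq_prev //.
have := next_cycle Cc Hu; have := prev_cycle Cc Hu.
by rewrite /erel_in => /and3P[-> _ ->] /and3P[_ -> ->].
Qed.

Lemma cycle_in_mem S c u : is_cycle (erel_in e S) c -> u \in c -> u \in S.
Proof. by move=> /is_cycleP[_ Cc _] Hu; have /and3P[] := next_cycle Cc Hu. Qed.

Lemma cycle_in_set0 c : ~~ is_cycle (erel_in e set0) c.
Proof.
apply/negP; case: c => [|u c] Hc; first by have [_ _] := is_cycleP Hc.
by have := cycle_in_mem Hc (mem_head u c); rewrite inE.
Qed.

Lemma cycle_in_sub S S' c :
  is_cycle (erel_in e S) c -> all (mem S') c -> is_cycle (erel_in e S') c.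
Proof.
move=> Hc HS; have [Uc Cc Sc] := is_cycleP Hc.
rewrite /is_cycle /ucycleb Uc Sc !andbT; apply: (sub_in_cycle (P := mem S')) HS Cc.
by move=> a b aS bS /and3P[_ _ ee]; rewrite /erel_in aS bS ee.
Qed.

Lemma cycle_in_deg S c u : is_cycle (erel_in e S) c -> u \in c -> 2 <= deg_in e S u.
Proof.
move=> Hc Hu; have [Hnp HnS HpS Hn Hp] := cycle_in_nbrs Hc Hu.
apply: leq_trans (_ : #|[set next c u; prev c u]| <= _); first by rewrite cards2 Hnp.
apply/subset_leq_card/subsetP => z; rewrite !inE.
by case/orP=> /eqP ->; rewrite ?HnS ?Hn // HpS e_sym.
Qed.

Lemma cycle_in_deg2_nbr S c u w : is_cycle (erel_in e S) c -> u \in c ->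
  deg_in e S u = 2 -> w \in S -> e u w -> w = next c u \/ w = prev c u.
Proof.
move=> Hc Hu Hd wS ew; have [Hnp HnS HpS Hn Hp] := cycle_in_nbrs Hc Hu.
by apply: deg_in2_nbr Hd Hnp HnS Hn HpS _ wS ew; rewrite e_sym.
Qed.

Lemma fresh_nbr_color S (col : 'I_n -> 'I_n -> nat) u K : deg_in e S u < K ->
  exists2 a, a < K & forall w, w \in S -> e u w -> col u w != a.
Proof.
move=> HK; have [|a aK aA] := @fresh_color [seq col u w | w <- enum [set w in S | e u w]] K.
  by rewrite size_map -cardE.
by exists a => // w wS euw; apply: contraNneq aA => <-; rewrite map_f // mem_enum inE wS.
Qed.

Lemma cycle_colors_eq_in (col col' : 'I_n -> 'I_n -> nat) c : uniq c ->
  {in c &, col =2 col'} -> cycle_colors col c = cycle_colors col' c.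
Proof.
move=> Uc H; apply/eq_in_map => p /(mem_zip_rot1 Uc) [p1 p2].
by apply: H; rewrite // p2 mem_next.
Qed.

Lemma mem_cycle_colors S c (col : 'I_n -> 'I_n -> nat) u w :
  is_cycle (erel_in e S) c -> u \in c -> deg_in e S u = 2 -> w \in S -> e u w ->
  col u w = col w u -> col u w \in cycle_colors col c.
Proof.
move=> Hc Hu Hd wS euw Hs; have [Uc _ _] := is_cycleP Hc.
case: (cycle_in_deg2_nbr Hc Hu Hd wS euw) => E; rewrite E in Hs *.
  exact: map_f (next_in_zip_rot1 Hu).
by rewrite Hs; apply: map_f (prev_in_zip_rot1 Uc Hu).
Qed.

Lemma pendant_step S v K r : 0 < K -> (forall u, deg_in e S u <= K) ->
  v \in S -> deg_in e S v <= 1 ->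
  r_colorable (erel_in e (S :\ v)) r K -> r_colorable (erel_in e S) r K.
Proof.
move=> K0 HK vS v1 [col' [s1 s2 s3 s4]].
have vS' : v \notin S :\ v by rewrite !inE eqxx.
have [a aK Ha] : exists2 a, a < K & forall u w, u \in S -> e v u ->
    w \in S :\ v -> e u w -> col' u w != a.
  case: (pickP [pred u | (u \in S) && e v u]) => [u /andP[uS evu] | none].
    have [|a aK Ha] := @fresh_nbr_color (S :\ v) col' u K.
      by apply: leq_trans (HK u); apply: deg_in_ltS (subsetDl _ _) vS vS' _; rewrite e_sym.
    by exists a => // u' w u'S evu'; rewrite (deg_in_le1_nbr v1 u'S evu' uS evu); apply: Ha.
  by exists 0 => // u w uS evu; have := none u; rewrite /= uS evu.
have in_S' x y : erel_in e S x y -> x != v -> y != v -> erel_in e (S :\ v) x y.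
  by case/and3P=> xS yS exy xv yv; rewrite /erel_in !inE xv yv xS yS exy.
exists (fun x y => if (x == v) || (y == v) then a else col' x y); split.
- move=> x y Hxy; rewrite orbC; case: ifP => // /norP[yv xv]; exact/s1/in_S'.
- by move=> x y Hxy; case: ifP => // /norP[xv yv]; apply/s2/in_S'.
- move=> x y z /and3P[xS yS exy] /and3P[_ zS exz] yz.
  have [xv | xv] := eqVneq x v.
    by move: yz; rewrite -xv in v1; rewrite (deg_in_le1_nbr v1 yS exy zS exz) eqxx.
  have [yv | yv] := eqVneq y v; have [zv | zv] := eqVneq z v => /=.
  + by move: yz; rewrite yv zv eqxx.
  + by rewrite eq_sym Ha // ?inE ?zv // -yv e_sym.
  + by rewrite Ha // ?inE ?yv // -zv e_sym.
  + by apply: s3 yz; apply: in_S'; rewrite /erel_in ?xS ?yS ?zS.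
- move=> c Hc; have [Uc _ _] := is_cycleP Hc.
  have c_v u : u \in c -> u != v.
    by move=> uc; apply: contraTneq v1 => <-; rewrite -ltnNge (cycle_in_deg Hc uc).
  rewrite (@cycle_colors_eq_in _ col' c Uc).
    apply/s4/(cycle_in_sub Hc)/allP => u uc.
    by rewrite /= !inE c_v // (cycle_in_mem Hc uc).
  by move=> x y xc yc /=; rewrite (negbTE (c_v x xc)) (negbTE (c_v y yc)).
Qed.

Section Ear.
Variables (S : {set 'I_n}) (x y : 'I_n) (s : seq 'I_n).
Hypotheses (ear_path : path (erel_in e S) x (rcons s y))
           (ear_uniq : uniq (x :: rcons s y))
           (ear_deg : all (fun v => deg_in e S v == 2) s).
Local Notation P := (x :: rcons s y).
Local Notation m := (size s).

Lemma size_ear : size P = m.+2.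
Proof. by rewrite /= size_rcons. Qed.

Lemma nth_ear_last : nth x P m.+1 = y.
Proof. by rewrite /= nth_rcons ltnn eqxx. Qed.

Lemma ear_edge j : j <= m -> erel_in e S (nth x P j) (nth x P j.+1).
Proof. by move=> jm; move/(pathP x): ear_path; apply; rewrite size_rcons ltnS. Qed.

Lemma nth_ear_inj i k : i <= m.+1 -> k <= m.+1 -> nth x P i = nth x P k -> i = k.
Proof. by move=> Hi Hk /eqP; rewrite nth_uniq ?size_ear // => /eqP. Qed.

Lemma nth_ear_internal j : 0 < j <= m -> nth x P j \in s.
Proof. by case: j => [|j] // /andP[_ Hj]; rewrite /= nth_rcons Hj mem_nth. Qed.

Lemma ear_internal_deg u : u \in s -> deg_in e S u = 2.
Proof. by move=> us; apply/eqP; move/allP: ear_deg; apply. Qed.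

Lemma ear_internal_index u : u \in s -> exists2 j, 0 < j <= m & u = nth x P j.
Proof.
move=> us; exists (index u s).+1; first by rewrite /= index_mem.
by rewrite /= nth_rcons index_mem us nth_index.
Qed.

Lemma ear_internal_nbr j w : 0 < j <= m -> w \in S -> e (nth x P j) w ->
  w = nth x P j.-1 \/ w = nth x P j.+1.
Proof.
move=> /andP[j0 jm] wS ew.
have /and3P[aS _ ea] : erel_in e S (nth x P j.-1) (nth x P j).
  by have := ear_edge (leq_trans (leq_pred j) jm); rewrite prednK.
have /and3P[_ bS eb] := ear_edge jm.
have ab : nth x P j.-1 != nth x P j.+1.
  by apply/eqP => /nth_ear_inj; lia.
rewrite e_sym in ea; apply: deg_in2_nbr _ ab aS ea bS eb wS ew.
by rewrite ear_internal_deg // nth_ear_internal ?j0.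
Qed.

Lemma ear_edge_touching u w : erel_in e S u w -> (u \in s) || (w \in s) ->
  exists2 j, j <= m & u = nth x P j /\ w = nth x P j.+1 \/
                      w = nth x P j /\ u = nth x P j.+1.
Proof.
wlog us : u w / u \in s.
  move=> hyp Huw /orP[us | ws]; first by apply: hyp; rewrite ?us.
  have Hwu : erel_in e S w u.
    by case/and3P: Huw => uS wS euw; rewrite /erel_in uS wS e_sym.
  have [|j jm [E|E]] := hyp w u ws Hwu; rewrite ?ws //.
  - by exists j => //; right.
  - by exists j => //; left.
move=> /and3P[_ wS euw] _; have [i Hi ui] := ear_internal_index us.
rewrite ui in euw *; have /andP[i0 im] := Hi.
case: (ear_internal_nbr Hi wS euw) => ->.
  by exists i.-1; [lia | right; rewrite prednK].
by exists i => //; left.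
Qed.

Lemma ear_in_cycle c :
  is_cycle (erel_in e S) c -> has (mem c) s -> {subset P <= c}.
Proof.
move=> Hc /hasP[w ws wc] v /(nthP x)[k]; rewrite size_ear => Hk <-.
have [i Hi wi] := ear_internal_index ws; rewrite {}wi in wc.
apply: (@interval_spread (fun j => nth x P j \in c) m i) => // {k Hk wc i Hi}j Hj jc.
have /andP[j0 jm] := Hj.
have on_cycle k : k \in [:: j.-1; j.+1] -> nth x P k \in c.
  move=> Hk; have [wS ew] : nth x P k \in S /\ e (nth x P j) (nth x P k).
    move: Hk; rewrite !inE => /orP[] /eqP ->.
      have := ear_edge (leq_trans (leq_pred j) jm).
      by rewrite prednK // => /and3P[-> _ ]; rewrite e_sym.
    by have /and3P[] := ear_edge jm.
  have [|->|->] := cycle_in_deg2_nbr Hc jc _ wS ew; rewrite ?mem_next ?mem_prev //.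
  exact/ear_internal_deg/nth_ear_internal.
by split; apply: on_cycle; rewrite !inE eqxx ?orbT.
Qed.

Lemma ear_cycle_size c :
  is_cycle (erel_in e S) c -> has (mem c) s -> m.+2 <= size c.
Proof.
move=> Hc Hs; rewrite -size_ear; apply: uniq_leq_size ear_uniq _.
exact: ear_in_cycle.
Qed.

Section EarColoring.
Variables (K r : nat) (col' : 'I_n -> 'I_n -> nat) (f : nat -> nat).
Local Notation S' := (S :\: [set v in s]).
Hypotheses (s_nonempty : 0 < m)
           (col'_ok : r_acyclic_coloring (erel_in e S') r K col')
           (f_lt : forall j, j <= m -> f j < K)
           (f_adj : forall j, j < m -> f j != f j.+1)
           (f_first : forall w, w \in S' -> e x w -> col' x w != f 0)
           (f_last : forall w, w \in S' -> e y w -> col' y w != f m)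
           (f_colors : r <= size (undup [seq f j | j <- iota 0 m.+1])).

Definition ear_coloring u w :=
  if (u \in s) || (w \in s) then f (minn (index u P) (index w P)) else col' u w.

Lemma ear_coloring_edge u w j : j <= m ->
  u = nth x P j /\ w = nth x P j.+1 \/ w = nth x P j /\ u = nth x P j.+1 ->
  ear_coloring u w = f j.
Proof.
move=> jm uw; have touch : (nth x P j \in s) || (nth x P j.+1 \in s).
  case: (ltnP j m) => H; last by rewrite (@nth_ear_internal j) //; lia.
  by rewrite (@nth_ear_internal j.+1) ?orbT.
have idx k : k <= m.+1 -> index (nth x P k) P = k.
  by move=> Hk; rewrite index_uniq ?size_ear.
rewrite /ear_coloring; case: uw => -[-> ->]; last rewrite orbC minnC.
  by rewrite touch !idx ?(minn_idPl (leqnSn j)) ?ltnS ?(leqW jm).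
by rewrite touch !idx ?(minn_idPl (leqnSn j)) ?ltnS ?(leqW jm).
Qed.

Lemma erel_in_off_ear u w : erel_in e S u w -> u \notin s -> w \notin s ->
  erel_in e S' u w.
Proof. by case/and3P=> uS wS euw us ws; rewrite /erel_in !inE us ws uS wS euw. Qed.

Lemma ear_coloring_off_ear u w : ~~ ((u \in s) || (w \in s)) -> ear_coloring u w = col' u w.
Proof. by rewrite /ear_coloring => /negbTE ->. Qed.

Lemma ear_coloring_end t y1 y2 : erel_in e S t y1 -> erel_in e S t y2 ->
  (t \in s) || (y1 \in s) -> ~~ ((t \in s) || (y2 \in s)) ->
  ear_coloring t y1 != ear_coloring t y2.
Proof.
move=> H1 H2 T1 T2; rewrite (ear_coloring_off_ear T2).
have /norP[ts y2s] := T2; have /and3P[_ y2S ety2] := H2.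
have y2S' : y2 \in S' by rewrite !inE y2s.
have [j jm E] := ear_edge_touching H1 T1; rewrite (ear_coloring_edge jm E).
have ends k : k <= m.+1 -> t = nth x P k -> k = 0 \/ k = m.+1.
  move=> km tk; have [->|k0] := posnP k; [by left | right].
  by apply/eqP; apply: contraNT ts; rewrite tk => ?; apply: nth_ear_internal; lia.
case: E => [[tj _] | [_ tj]].
- have [j0|] := ends j (leqW jm) tj; last lia.
  by move: ety2; rewrite eq_sym tj j0 => /= ety2; apply: f_first.
- have [//|/eqP] := ends j.+1 jm tj; rewrite eqSS => /eqP jm'.
  by move: ety2; rewrite eq_sym tj jm' nth_ear_last => ety2; apply: f_last.
Qed.

Lemma ear_coloring_proper t y1 y2 : erel_in e S t y1 -> erel_in e S t y2 ->
  y1 != y2 -> ear_coloring t y1 != ear_coloring t y2.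
Proof.
move=> H1 H2 y12.
have [T1|T1] := boolP ((t \in s) || (y1 \in s));
  have [T2|T2] := boolP ((t \in s) || (y2 \in s)).
- have [j1 j1m E1] := ear_edge_touching H1 T1.
  have [j2 j2m E2] := ear_edge_touching H2 T2.
  rewrite (ear_coloring_edge j1m E1) (ear_coloring_edge j2m E2).
  case: E1 => [[t1 e1] | [e1 t1]]; case: E2 => [[t2 e2] | [e2 t2]];
    rewrite t1 in t2.
  + by move: y12; rewrite e1 e2 (nth_ear_inj (leqW j1m) (leqW j2m) t2) eqxx.
  + have E := nth_ear_inj (leqW j1m) (j2m : j2 < m.+1) t2.
    by rewrite E in j1m *; rewrite eq_sym f_adj.
  + have E := nth_ear_inj (j1m : j1 < m.+1) (leqW j2m) t2.
    by rewrite -E in j2m *; rewrite f_adj.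
  + have /succn_inj E := nth_ear_inj (j1m : j1 < m.+1) (j2m : j2 < m.+1) t2.
    by move: y12; rewrite e1 e2 E eqxx.
- exact: ear_coloring_end.
- by rewrite eq_sym; apply: ear_coloring_end.
- have [_ _ col'_proper _] := col'_ok.
  rewrite !ear_coloring_off_ear //; apply: col'_proper y12;
    apply: erel_in_off_ear; by [case/norP: T1 | case/norP: T2].
Qed.

Lemma ear_colors_on_cycle c j : is_cycle (erel_in e S) c -> has (mem c) s ->
  j <= m -> f j \in cycle_colors ear_coloring c.
Proof.
move=> Hc meets jm; have P_c := ear_in_cycle Hc meets.
have on_c k : k <= m.+1 -> nth x P k \in c.
  by move=> km; apply: P_c; rewrite mem_nth // size_ear.
have /and3P[ajS bjS ej] := ear_edge jm.
have [colF colB] : ear_coloring (nth x P j) (nth x P j.+1) = f j /\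
                   ear_coloring (nth x P j.+1) (nth x P j) = f j.
  split; [exact: ear_coloring_edge jm (or_introl (conj erefl erefl))|].
  exact: ear_coloring_edge jm (or_intror (conj erefl erefl)).
have [j0|j0] := posnP j.
- rewrite -colB; apply: mem_cycle_colors Hc _ _ ajS _ _; rewrite ?colF //.
  + exact: on_c (jm : j < m.+1).
  + by rewrite ear_internal_deg // nth_ear_internal // j0.
  + by rewrite e_sym.
- rewrite -colF; apply: mem_cycle_colors Hc _ _ bjS ej _; rewrite ?colB //.
  + exact: on_c (leqW jm).
  + by rewrite ear_internal_deg // nth_ear_internal // j0.
Qed.

Lemma ear_coloring_cycle c : is_cycle (erel_in e S) c ->
  minn (size c) r <= size (undup (cycle_colors ear_coloring c)).
Proof.
move=> Hc; have [Uc _ _] := is_cycleP Hc; have [_ _ _ col'_cycle] := col'_ok.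
have [meets | off] := boolP (has (mem c) s).
  apply: leq_trans (geq_minr _ _) (leq_trans f_colors _).
  apply: uniq_leq_size (undup_uniq _) _ => z; rewrite !mem_undup.
  by case/mapP=> j; rewrite mem_iota add0n ltnS => jm ->; apply: ear_colors_on_cycle.
have off_s v : v \in c -> v \notin s.
  by move=> vc; apply: contra off => vs; apply/hasP; exists v.
rewrite (@cycle_colors_eq_in _ col' c Uc).
  apply/col'_cycle/(cycle_in_sub Hc)/allP => u uc /=.
  by rewrite !inE (cycle_in_mem Hc uc) off_s.
by move=> u w uc wc; rewrite ear_coloring_off_ear // negb_or !off_s.
Qed.

Lemma ear_coloring_ok : r_acyclic_coloring (erel_in e S) r K ear_coloring.
Proof.
have [col'_sym col'_lt _ _] := col'_ok.
split; [move=> u w H | move=> u w H | exact: ear_coloring_proper | exact: ear_coloring_cycle].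
  rewrite /ear_coloring orbC minnC; case: ifP => // /norP[ws us].
  exact/col'_sym/erel_in_off_ear.
have [T | T] := boolP ((u \in s) || (w \in s)).
  by have [j jm E] := ear_edge_touching H T; rewrite (ear_coloring_edge jm E) f_lt.
by rewrite ear_coloring_off_ear //; case/norP: T => us ws; apply/col'_lt/erel_in_off_ear.
Qed.

End EarColoring.

Lemma ear_step K r : 3 <= r -> r <= K -> r <= m -> x \in S ->
  (forall u, deg_in e S u <= K) ->
  r_colorable (erel_in e (S :\: [set v in s])) r K -> r_colorable (erel_in e S) r K.
Proof.
move=> r3 rK rm xS HK [col' col'_ok].
have m0 : 0 < m by lia.
have off_ear k : 0 < k <= m -> nth x P k \notin S :\: [set v in s].
  by move=> Hk; rewrite !inE nth_ear_internal.
have [|a aK fresh_a] := @fresh_nbr_color (S :\: [set v in s]) col' x K.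
  apply: leq_trans (HK x); apply: deg_in_ltS (subsetDl _ _) _ (off_ear 1 _) _.
  - by have /and3P[] := ear_edge (leq0n m).
  - by rewrite m0.
  - by have /and3P[] := ear_edge (leq0n m).
have [|b bK fresh_b] := @fresh_nbr_color (S :\: [set v in s]) col' y K.
  have /and3P[mS _ emy] := ear_edge (leqnn m); rewrite nth_ear_last in emy.
  apply: leq_trans (HK y); apply: deg_in_ltS (subsetDl _ _) mS (off_ear m _) _.
  - by rewrite m0 leqnn.
  - by rewrite e_sym.
have [|f [f0 fm f_lt f_adj f_colors]] := @path_coloring K r m.-1 a b r3 rK _ aK bK.
  by rewrite prednK.
rewrite prednK // in fm f_adj f_colors.
exists (ear_coloring col' f); apply: ear_coloring_ok => //.
- by move=> j jm; apply: f_adj; lia.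
- by move=> w wS ew; rewrite f0 fresh_a.
- by move=> w wS ew; rewrite fm fresh_b.
Qed.

End Ear.

Lemma reducible_cycle_size S p c :
  reducible e p S -> is_cycle (erel_in e S) c -> p <= size c.
Proof.
move=> red; elim: red c => [|{}S S' red_step _ IH] c Hc.
  by have := cycle_in_set0 c; rewrite Hc.
have [Uc _ _] := is_cycleP Hc.
case: red_step IH => [[v vS [v1 ->]] |
  [x [y [s [_ /andP[ear_path _] /andP[ear_uniq ear_deg] ps ->]]]]] IH.
  apply/IH/(cycle_in_sub Hc)/allP => u uc; rewrite /= !inE (cycle_in_mem Hc uc) andbT.
  by apply: contraTneq v1 => <-; rewrite -ltnNge (cycle_in_deg Hc uc).
have [meets | off] := boolP (has (mem c) s).
  by apply: leq_trans ps (ltnW (ear_cycle_size ear_path ear_uniq ear_deg Hc meets)).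
apply/IH/(cycle_in_sub Hc)/allP => u uc; rewrite /= !inE (cycle_in_mem Hc uc) andbT.
by apply: contra off => us; apply/hasP; exists u.
Qed.

Lemma reducible_colorable S K r : 3 <= r -> r <= K -> (forall u, deg e u <= K) ->
  reducible e r.+1 S -> r_colorable (erel_in e S) r K.
Proof.
move=> r3 rK HK; have deg_in_K S' u : deg_in e S' u <= K := leq_trans (deg_in_le S' u) (HK u).
elim=> [|{}S S' red_step _ IH].
  exists (fun _ _ => 0); split=> [u w|u w|u w z|c]; rewrite /erel_in ?inE //.
  by rewrite (negbTE (cycle_in_set0 c)).
case: red_step IH => [[v vS [v1 ->]] |
  [x [y [s [_ /andP[ear_path xS] /andP[ear_uniq ear_deg] ps ->]]]]] IH.
  by apply: (pendant_step _ (deg_in_K S) vS v1 IH); lia.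
exact: (ear_step ear_path ear_uniq ear_deg r3 rK ps xS (deg_in_K S) IH).
Qed.

End InducedSubgraph.

Lemma r_colorable_eq n (e1 e2 : rel 'I_n) r k :
  e1 =2 e2 -> r_colorable e1 r k -> r_colorable e2 r k.
Proof.
move=> E [col [c_sym c_lt c_proper c_cycle]]; exists col; split => [x y|x y|x y z|c].
- by rewrite -E; apply: c_sym.
- by rewrite -E; apply: c_lt.
- by rewrite -!E; apply: c_proper.
- by rewrite -(eq_is_cycle E); apply: c_cycle.
Qed.

Section ColoringBounds.
Variables (n : nat) (e : rel 'I_n) (r k : nat) (col : 'I_n -> 'I_n -> nat).
Hypothesis col_ok : r_acyclic_coloring e r k col.

Lemma deg_le_colors v : deg e v <= k.
Proof.
have [_ c_lt c_proper _] := col_ok.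
rewrite /deg cardE -(size_map (col v)) -(size_iota 0 k); apply: uniq_leq_size.
  rewrite map_inj_in_uniq ?enum_uniq // => a b; rewrite !mem_enum !inE => ea eb E.
  by have [//|ab] := eqVneq a b; move: (c_proper v a b ea eb ab); rewrite E eqxx.
by move=> z /mapP[w]; rewrite mem_enum inE => ew ->; rewrite mem_iota c_lt.
Qed.

Lemma cycle_colors_le c : is_cycle e c -> size (undup (cycle_colors col c)) <= k.
Proof.
have [_ c_lt _ _] := col_ok; move=> /is_cycleP[Uc Cc _].
rewrite -(size_iota 0 k); apply: uniq_leq_size (undup_uniq _) _ => z.
rewrite mem_undup => /mapP[p /(mem_zip_rot1 Uc)[p1 p2] ->].
by rewrite mem_iota c_lt // p2 (next_cycle Cc).
Qed.

End ColoringBounds.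

Theorem mainTheorem15 (r : nat) (C : graph_class) (g : nat) :
  3 <= r ->
  (forall n (e : rel 'I_n), C n e -> sgraph e) ->
  subexp_expansion C ->
  (forall n (e : rel 'I_n), C n e -> girth_ge e g -> path_degenerate e r.+1) ->
  forall n (e : rel 'I_n), C n e ->
    3 <= maxdeg e -> girth_ge e g -> ~ forest e ->
    arc_index_is e r (maxn (maxdeg e) r).
Proof.
move=> r3 C_simple _ C_degenerate n e Ce _ girth_e not_forest.
have [e_sym _] := C_simple n e Ce.
have red : reducible e r.+1 [set: 'I_n] := C_degenerate n e Ce girth_e.
split.
  apply: r_colorable_eq (erel_inT e) (reducible_colorable e_sym r3 (leq_maxr _ _) _ red).
  by move=> u; apply: leq_trans (leq_maxl _ r); apply: leq_bigmax.
move=> k [col col_ok]; rewrite geq_max; apply/andP; split.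
  by apply/bigmax_leqP => v _; apply: deg_le_colors col_ok v.
case: (leqP r k) => // kr; case: not_forest => c; apply/negP => Hc.
have c_long : r < size c.
  by apply: (reducible_cycle_size e_sym red); rewrite (eq_is_cycle (erel_inT e)).
have [_ _ _ col_cycle] := col_ok.
have := leq_trans (col_cycle c Hc) (cycle_colors_le col_ok Hc).
by rewrite (minn_idPr (ltnW c_long)) leqNgt kr.
Qed.
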